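(* For any $\mathcal A,\mathcal B\in\mathbb Q^{n\times n\times n_3}$, \[0<\rho_{QT}(\mathcal A*_Q\mathcal B)<1\iff 0<\rho_{QT}(\mathcal B*_Q\mathcal A)<1.\]
   Context: $\mathbb Q$ denotes the real quaternions with the usual Hamilton multiplication and $|a|=\sqrt{a_0^2+a_1^2+a_2^2+a_3^2}$; $\mathbb C$ is identified with $\{a_0+a_1\mathbf i\}$. Every quaternion array $A=A_0+A_1\mathbf i+A_2\mathbf j+A_3\mathbf k$ (real $A_t$) is written uniquely as $A=A_{\mathbf d}+\mathbf jA_{\mathbf c}$ with $A_{\mathbf d}=A_0+A_1\mathbf i$, $A_{\mathbf c}=A_2-A_3\mathbf i$. For $\mathcal A\in\mathbb Q^{n_1\times n_2\times n_3}$, $\mathcal A^{(s)}=\mathcal A(:,:,s)$. For a complex tensor $\mathcal C$, $\mathtt{bcirc}(\mathcal C)$ is the block circulant matrix with $(p,q)$ block $\mathcal C^{(((p-q)\bmod n_3)+1)}$. $P_{n_3}$ is the permutation matrix with first row $e_1^T$ and $r$-th row $e_{n_3+2-r}^T$ ($r\ge2$). $\mathtt{bcirc_z}(\mathcal A)=\mathtt{bcirc}(\mathcal A_{\mathbf d})+\mathbf j\,\mathtt{bcirc}(\mathcal A_{\mathbf c})(P_{n_3}\otimes I_{n_2})$. $\mathtt{unfold}(\mathcal B)=[\mathcal B^{(1)};\dots;\mathcal B^{(n_3)}]$, $\mathtt{fold}$ its inverse; QT-product $\mathcal A*_Q\mathcal B=\mathtt{fold}(\mathtt{bcirc_z}(\mathcal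 A)\mathtt{unfold}(\mathcal B))$. A right eigenvalue of a square quaternion matrix $M$ is $\lambda\in\mathbb Q$ with $Mx=x\lambda$ for some $x\neq0$; $\rho(M)$ is the maximum of $|\lambda|$ over right eigenvalues. QT-spectral radius: $\rho_{QT}(\mathcal A)=\rho(\mathtt{bcirc_z}(\mathcal A))$. *)

From HB Require Import structures.
From mathcomp Require Import all_boot all_order all_algebra.
From mathcomp Require Import ring.
From mathcomp Require Import boolp classical_sets reals.
Set Implicit Arguments. Unset Strict Implicit. Unset Printing Implicit Defensive.
Import Order.TTheory GRing.Theory Num.Theory.
Local Open Scope ring_scope.

(* Real quaternions a0 + a1 i + a2 j + a3 k over a commutative ring R,    *)
Definition quat (R : comNzRingType) : Type := (R * R * R * R)%type.

Section Quat.
Variable R : comNzRingType.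

HB.instance Definition _ := GRing.Zmodule.on (quat R).

Definition qmk (a0 a1 a2 a3 : R) : quat R := (a0, a1, a2, a3).
Definition q0 (q : quat R) : R := q.1.1.1.
Definition q1 (q : quat R) : R := q.1.1.2.
Definition q2 (q : quat R) : R := q.1.2.
Definition q3 (q : quat R) : R := q.2.

Definition qone : quat R := qmk 1 0 0 0.

Definition qmul (p q : quat R) : quat R :=
  qmk (q0 p * q0 q - q1 p * q1 q - q2 p * q2 q - q3 p * q3 q)
      (q0 p * q1 q + q1 p * q0 q + q2 p * q3 q - q3 p * q2 q)
      (q0 p * q2 q - q1 p * q3 q + q2 p * q0 q + q3 p * q1 q)
      (q0 p * q3 q + q1 p * q2 q - q2 p * q1 q + q3 p * q0 q).

Lemma quat_ext (p q : quat R) :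
  q0 p = q0 q -> q1 p = q1 q -> q2 p = q2 q -> q3 p = q3 q -> p = q.
Proof.
by case: p => [[[a b] c] d]; case: q => [[[a' b'] c'] d'];
  rewrite /q0 /q1 /q2 /q3 /= => -> -> -> ->.
Qed.

Lemma qmulA : associative qmul.
Proof.
by move=> [[[a b] c] d] [[[a' b'] c'] d'] [[[x y] z] w];
  apply: quat_ext; rewrite /qmul /qmk /qone; unfold q0, q1, q2, q3; simpl; ring.
Qed.

Lemma qmul1 : left_id qone qmul.
Proof.
by move=> [[[a b] c] d]; apply: quat_ext; rewrite /qmul /qmk /qone; unfold q0, q1, q2, q3; simpl; ring.
Qed.

Lemma qmulr1 : right_id qone qmul.
Proof.
by move=> [[[a b] c] d]; apply: quat_ext; rewrite /qmul /qmk /qone; unfold q0, q1, q2, q3; simpl; ring.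
Qed.

Lemma qmulDl : left_distributive qmul +%R.
Proof.
by move=> [[[a b] c] d] [[[a' b'] c'] d'] [[[x y] z] w];
  apply: quat_ext; rewrite /qmul /qmk /qone; unfold q0, q1, q2, q3; simpl; ring.
Qed.

Lemma qmulDr : right_distributive qmul +%R.
Proof.
by move=> [[[a b] c] d] [[[a' b'] c'] d'] [[[x y] z] w];
  apply: quat_ext; rewrite /qmul /qmk /qone; unfold q0, q1, q2, q3; simpl; ring.
Qed.

Lemma qone_neq0 : qone != 0.
Proof. by apply/negP => /eqP [] /eqP; rewrite oner_eq0. Qed.

HB.instance Definition _ := GRing.Zmodule_isNzRing.Build (quat R)
  qmulA qmul1 qmulr1 qmulDl qmulDr qone_neq0.

Definition qj : quat R := qmk 0 0 1 0.

(* complex parts: q = q_d + j q_c with q_d = q0 + q1 i, q_c = q2 - q3 i *)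
Definition qdpart (q : quat R) : quat R := qmk (q0 q) (q1 q) 0 0.
Definition qcpart (q : quat R) : quat R := qmk (q2 q) (- q3 q) 0 0.

End Quat.

Definition qnorm (R : realType) (q : quat R) : R :=
  Num.sqrt (q0 q ^+ 2 + q1 q ^+ 2 + q2 q ^+ 2 + q3 q ^+ 2).

(* Third-order tensors in Q^{n1 x n2 x n3}: the family of frontal slices  *)
(* A^{(s)} = A(:,:,s), s : 'I_n3 (0-based).                               *)
Definition qtensor (R : comNzRingType) (n1 n2 n3 : nat) :=
  'I_n3 -> 'M[quat R]_(n1, n2).

Section Tensor.
Variable R : comNzRingType.

Definition tdpart n1 n2 n3 (A : qtensor R n1 n2 n3) : qtensor R n1 n2 n3 :=
  fun s => map_mx (@qdpart R) (A s).
Definition tcpart n1 n2 n3 (A : qtensor R n1 n2 n3) : qtensor R n1 n2 n3 :=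
  fun s => map_mx (@qcpart R) (A s).

Lemma ord_modsub_proof n (p q : 'I_n) : ((p + (n - q)) %% n < n)%N.
Proof. by apply: ltn_pmod; apply: leq_ltn_trans (ltn_ord p). Qed.
Definition ord_modsub n (p q : 'I_n) : 'I_n := Ordinal (ord_modsub_proof p q).

Definition bcirc n1 n2 n3 (C : qtensor R n1 n2 n3) :
    'M[quat R]_(\sum_(i < n3) n1, \sum_(j < n3) n2) :=
  @mxblock _ n3 n3 (fun _ => n1) (fun _ => n2)
    (fun p q => C (ord_modsub p q)).

(* the permutation matrix P_{n3}: row 1 is e_1, row r >= 2 is e_{n3+2-r};  *)
(* 0-based: row p has its 1 in column (n3 - p) mod n3                     *)
Definition Pperm n3 : 'M[quat R]_n3 :=
  \matrix_(p < n3, q < n3) (((q : nat) == (n3 - p) %% n3)%N)%:R.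

(* Kronecker product P_{n3} (x) I_{n2}, as a block matrix *)
Definition Pkron n3 n2 :
    'M[quat R]_(\sum_(i < n3) n2, \sum_(j < n3) n2) :=
  @mxblock _ n3 n3 (fun _ => n2) (fun _ => n2)
    (fun p q => (Pperm n3 p q)%:M : 'M[quat R]_n2).

Definition bcirc_z n1 n2 n3 (A : qtensor R n1 n2 n3) :
    'M[quat R]_(\sum_(i < n3) n1, \sum_(j < n3) n2) :=
  bcirc (tdpart A) + qj R *: (bcirc (tcpart A) *m Pkron n3 n2).

Definition unfold n1 n2 n3 (B : qtensor R n1 n2 n3) :
    'M[quat R]_(\sum_(i < n3) n1, n2) :=
  @mxcol _ n3 (fun _ => n1) n2 (fun s => B s).

Definition fold n1 n2 n3 (M : 'M[quat R]_(\sum_(i < n3) n1, n2)) :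
    qtensor R n1 n2 n3 :=
  fun s => submxcol (p_ := fun _ : 'I_n3 => n1) M s.

Definition qtprod n1 n2 n4 n3 (A : qtensor R n1 n2 n3)
    (B : qtensor R n2 n4 n3) : qtensor R n1 n4 n3 :=
  fold (bcirc_z A *m unfold B).

End Tensor.

Definition right_eigenvalue (R : comNzRingType) (k : nat)
    (M : 'M[quat R]_k) (lam : quat R) : Prop :=
  exists x : 'cV[quat R]_k, x != 0 /\ M *m x = \col_i (x i 0 * lam).

Definition spec_radius (R : realType) (k : nat) (M : 'M[quat R]_k) : R :=
  sup [set qnorm lam | lam in right_eigenvalue M]%classic.

Definition rho_QT (R : realType) n n3 (A : qtensor R n n n3) : R :=
  spec_radius (bcirc_z A).

(* The block-circulant representation is multiplicative:
   [bcirc_z (A *_Q B) = bcirc_z A *m bcirc_z B].  Write every quaternion as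
   [q = q_d + j q_c] with complex [q_d], [q_c].  Block [(p, q)] of [bcirc_z T]
   is [T_d (p - q) + j T_c (p + q)] (indices mod [n3]), and [j z = conj z j]
   for complex [z] gives the d- and c-parts of a product; the two sides then
   agree after reindexing the sums over [Z/n3].  So the two QT-spectral radii
   are those of [M N] and [N M], which have the same nonzero right eigenvalues
   ([x |-> N x] maps eigenvectors to eigenvectors, as quaternions have no zero
   divisors); hence they are equal. *)

From HB Require Import structures.
From mathcomp Require Import all_boot all_order all_algebra.
From mathcomp Require Import ring.
From mathcomp Require Import boolp classical_sets reals.
Set Implicit Arguments. Unset Strict Implicit. Unset Printing Implicit Defensive.
Import Order.TTheory GRing.Theory Num.Theory.
Local Open Scope ring_scope.

Section OrdinalModular.
Variable m : nat.
Implicit Types p q t : 'I_m.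

Lemma ord_modsubE k (p q : 'I_k.+1) : ord_modsub p q = p - q.
Proof. by apply: val_inj; rewrite /= modnDmr. Qed.

Lemma Zp_addE k (p q : 'I_k.+1) : Zp_add p q = p + q.
Proof. by []. Qed.

Lemma Zp_oppE k (p : 'I_k.+1) : Zp_opp p = - p.
Proof. by []. Qed.

Lemma ord_modsubBB p q t :
  ord_modsub (ord_modsub p q) (ord_modsub t q) = ord_modsub p t.
Proof.
by case: m p q t => [[]//|k] p q t;
  rewrite !(ord_modsubE, Zp_addE, Zp_oppE) opprB addrA subrK.
Qed.

Lemma ord_modsubDD p q t :
  ord_modsub (Zp_add p q) (Zp_add t q) = ord_modsub p t.
Proof.
by case: m p q t => [[]//|k] p q t;
  rewrite !(ord_modsubE, Zp_addE, Zp_oppE) opprD addrACA subrr addr0.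
Qed.

Lemma Zp_addBD p q t : Zp_add (ord_modsub p q) (Zp_add t q) = Zp_add p t.
Proof.
by case: m p q t => [[]//|k] p q t;
  rewrite !(ord_modsubE, Zp_addE, Zp_oppE) addrACA addNr addr0.
Qed.

Lemma Zp_addDB p q t : Zp_add (Zp_add p q) (ord_modsub t q) = Zp_add p t.
Proof.
by case: m p q t => [[]//|k] p q t;
  rewrite !(ord_modsubE, Zp_addE, Zp_oppE) addrACA subrr addr0.
Qed.

Lemma ord_modsubNr p q : ord_modsub p (Zp_opp q) = Zp_add p q.
Proof.
by case: m p q => [[]//|k] p q; rewrite ord_modsubE Zp_addE Zp_oppE opprK.
Qed.

Lemma ord_modsubl_inj q : injective (fun t => ord_modsub t q).
Proof.
move=> u v; case: m q u v => [[]//|k] q u v /=.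
by rewrite !ord_modsubE; apply: addIr.
Qed.

Lemma Zp_addl_inj q : injective (fun t => Zp_add t q).
Proof.
move=> u v; case: m q u v => [[]//|k] q u v /=.
by rewrite !Zp_addE; apply: addIr.
Qed.

Lemma eq_Zp_oppC p q : (p == Zp_opp q) = (q == Zp_opp p).
Proof. by case: m p q => [[]//|k] p q; rewrite !Zp_oppE eq_sym eqr_oppLR. Qed.

End OrdinalModular.

Section QuatParts.
Variable R : comNzRingType.
Local Notation Q := (quat R).
Implicit Types x y : Q.

(* On the complex quaternions [qmk a b 0 0] this is complex conjugation; it *)
(* comes from the commutation rule [z * qj = qj * cconj z] for complex [z]. *)
Definition cconj x : Q := qmk (q0 x) (- q1 x) 0 0.

Ltac quat_ring :=
  repeat match goal with x : quat R |- _ => move: x => [[[? ?] ?] ?] end;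
  apply: quat_ext;
  rewrite /GRing.mul /GRing.add /GRing.opp /GRing.zero /=
    /qmul /qdpart /qcpart /cconj /qj /qmk /q0 /q1 /q2 /q3 /=; ring.

Lemma qdpart_is_zmod_morphism : zmod_morphism (@qdpart R).
Proof. by move=> x y; quat_ring. Qed.
HB.instance Definition _ :=
  GRing.isZmodMorphism.Build Q Q (@qdpart R) qdpart_is_zmod_morphism.

Lemma qcpart_is_zmod_morphism : zmod_morphism (@qcpart R).
Proof. by move=> x y; quat_ring. Qed.
HB.instance Definition _ :=
  GRing.isZmodMorphism.Build Q Q (@qcpart R) qcpart_is_zmod_morphism.

Lemma qpart_decomp x : x = qdpart x + qj R * qcpart x.
Proof. quat_ring. Qed.

Lemma qdpart_decomp x y : qdpart (qdpart x + qj R * qcpart y) = qdpart x.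
Proof. quat_ring. Qed.

Lemma qcpart_decomp x y : qcpart (qdpart x + qj R * qcpart y) = qcpart y.
Proof. quat_ring. Qed.

Lemma qdpartM x y :
  qdpart (x * y) = qdpart x * qdpart y - cconj (qcpart x) * qcpart y.
Proof. quat_ring. Qed.

Lemma qcpartM x y :
  qcpart (x * y) = cconj (qdpart x) * qcpart y + qcpart x * qdpart y.
Proof. quat_ring. Qed.

End QuatParts.

Section BlockCirculant.
Variable R : comNzRingType.
Local Notation Q := (quat R).
Local Notation dmx X := (map_mx (@qdpart R) X).
Local Notation cmx X := (map_mx (@qcpart R) X).
Local Notation conjmx X := (map_mx (@cconj R) X).

Section MatrixParts.
Variables m k l : nat.
Implicit Types X Y : 'M[Q]_(m, k).

Lemma mx_qpart_decomp X : X = dmx X + qj R *: cmx X.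
Proof. by apply/matrixP => i j; rewrite !mxE -qpart_decomp. Qed.

Lemma mx_qpart_inj X Y : dmx X = dmx Y -> cmx X = cmx Y -> X = Y.
Proof.
by move=> eq_d eq_c; rewrite (mx_qpart_decomp X) (mx_qpart_decomp Y) eq_d eq_c.
Qed.

Lemma map_qdpart_decomp X Y : dmx (dmx X + qj R *: cmx Y) = dmx X.
Proof. by apply/matrixP => i j; rewrite !mxE qdpart_decomp. Qed.

Lemma map_qcpart_decomp X Y : cmx (dmx X + qj R *: cmx Y) = cmx Y.
Proof. by apply/matrixP => i j; rewrite !mxE qcpart_decomp. Qed.

Lemma map_qdpartM X (Y : 'M[Q]_(k, l)) :
  dmx (X *m Y) = dmx X *m dmx Y - conjmx (cmx X) *m cmx Y.
Proof.
apply/matrixP => i j; rewrite !mxE raddf_sum -sumrB.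
by apply: eq_bigr => r _; rewrite !mxE /= qdpartM.
Qed.

Lemma map_qcpartM X (Y : 'M[Q]_(k, l)) :
  cmx (X *m Y) = conjmx (dmx X) *m cmx Y + cmx X *m dmx Y.
Proof.
apply/matrixP => i j; rewrite !mxE raddf_sum -big_split.
by apply: eq_bigr => r _; rewrite !mxE /= qcpartM.
Qed.

End MatrixParts.

Lemma scale_mxblock (p q : nat) (p_ : 'I_p -> nat) (q_ : 'I_q -> nat) (a : Q)
    (B : forall i j, 'M[Q]_(p_ i, q_ j)) :
  a *: \mxblock_(i, j) B i j = \mxblock_(i, j) (a *: B i j).
Proof. by apply/matrixP => i j; rewrite !mxE. Qed.

Lemma Pperm_mxE n3 (p q : 'I_n3) : Pperm R n3 p q = (p == Zp_opp q)%:R.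
Proof. by rewrite mxE eq_Zp_oppC. Qed.

Lemma mul_bcirc_Pkron n1 n2 n3 (C : qtensor R n1 n2 n3) :
  bcirc C *m Pkron R n3 n2 = \mxblock_(p, q) C (Zp_add p q).
Proof.
rewrite mul_mxblock; apply: eq_mxblock => p q.
rewrite (bigD1 (Zp_opp q)) //= big1 => [|r /negbTE neq_r].
  by rewrite Pperm_mxE eqxx mulmx1 addr0 ord_modsubNr.
by rewrite Pperm_mxE neq_r raddf0 mulmx0.
Qed.

Definition bcirc_z_block n1 n2 n3 (T : qtensor R n1 n2 n3) (p q : 'I_n3) :=
  dmx (T (ord_modsub p q)) + qj R *: cmx (T (Zp_add p q)).

Lemma bcirc_zE n1 n2 n3 (T : qtensor R n1 n2 n3) :
  bcirc_z T = \mxblock_(p, q) bcirc_z_block T p q.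
Proof. by rewrite /bcirc_z mul_bcirc_Pkron scale_mxblock -mxblockD. Qed.

Lemma qtprodE n1 n2 n4 n3 (A : qtensor R n1 n2 n3) (B : qtensor R n2 n4 n3) s :
  qtprod A B s = \sum_r bcirc_z_block A s r *m B r.
Proof. by rewrite /qtprod /fold /unfold bcirc_zE mul_mxblock_mxrow mxcolK. Qed.


Lemma bcirc_zM n1 n2 n4 n3 (A : qtensor R n1 n2 n3) (B : qtensor R n2 n4 n3) :
  bcirc_z (qtprod A B) = bcirc_z A *m bcirc_z B.
Proof.
rewrite !bcirc_zE mul_mxblock; apply: eq_mxblock => p q.
rewrite /bcirc_z_block; apply: mx_qpart_inj.
- rewrite map_qdpart_decomp qtprodE !map_mx_sum.
  under eq_bigr do rewrite map_qdpartM map_qdpart_decomp map_qcpart_decomp.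
  under [RHS]eq_bigr do rewrite map_qdpartM !map_qdpart_decomp !map_qcpart_decomp.
  rewrite !sumrB; congr (_ - _).
  + rewrite (reindex_inj (@ord_modsubl_inj _ q)); apply: eq_bigr => t _.
    by rewrite ord_modsubBB.
  + rewrite (reindex_inj (@Zp_addl_inj _ q)); apply: eq_bigr => t _.
    by rewrite Zp_addBD.
- rewrite map_qcpart_decomp qtprodE !map_mx_sum.
  under eq_bigr do rewrite map_qcpartM map_qdpart_decomp map_qcpart_decomp.
  under [RHS]eq_bigr do rewrite map_qcpartM !map_qdpart_decomp !map_qcpart_decomp.
  rewrite !big_split; congr (_ + _).
  + rewrite (reindex_inj (@Zp_addl_inj _ q)); apply: eq_bigr => t _.
    by rewrite ord_modsubDD.
  + rewrite (reindex_inj (@ord_modsubl_inj _ q)); apply: eq_bigr => t _.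
    by rewrite Zp_addDB.
Qed.

End BlockCirculant.

Definition qnorm2 (R : comNzRingType) (x : quat R) : R :=
  q0 x ^+ 2 + q1 x ^+ 2 + q2 x ^+ 2 + q3 x ^+ 2.

Lemma qnorm2M (R : comNzRingType) (x y : quat R) :
  qnorm2 (x * y) = qnorm2 x * qnorm2 y.
Proof.
change (qnorm2 (qmul x y) = qnorm2 x * qnorm2 y).
move: x y => [[[a b] c] d] [[[a' b'] c'] d'].
by rewrite /qnorm2 /qmul /qmk /q0 /q1 /q2 /q3 /=; ring.
Qed.

Lemma qnorm2_eq0 (R : realDomainType) (x : quat R) : (qnorm2 x == 0) = (x == 0).
Proof.
move: x => [[[a b] c] d]; rewrite /qnorm2 /q0 /q1 /q2 /q3 /=.
by rewrite !paddr_eq0 ?addr_ge0 ?sqr_ge0 // !sqrf_eq0.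
Qed.

Lemma quat_mulf_eq0 (R : realDomainType) (x y : quat R) :
  (x * y == 0) = (x == 0) || (y == 0).
Proof.
apply/idP/idP; last by case/orP => /eqP ->; rewrite ?mul0r ?mulr0.
by rewrite -[x * y == 0]qnorm2_eq0 qnorm2M mulf_eq0 !qnorm2_eq0.
Qed.

Lemma qnorm0 (R : realType) : qnorm (0 : quat R) = 0.
Proof. by rewrite /qnorm /q0 /q1 /q2 /q3 /= expr0n /= !addr0 sqrtr0. Qed.

Section SpectralRadius.
Local Open Scope classical_set_scope.
Variables (R : realType) (k : nat).
Local Notation Q := (quat R).
Implicit Types M N : 'M[Q]_k.

Lemma right_eigenvalue_mulmxC M N lam :
  lam != 0 -> right_eigenvalue (M *m N) lam -> right_eigenvalue (N *m M) lam.
Proof.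
move=> lam_neq0 [x [x_neq0 eig_x]]; exists (N *m x); split.
  apply: contra_neq x_neq0 => Nx0; apply/matrixP => i j; rewrite (ord1 j) mxE.
  have := congr1 (fun X : 'cV[Q]_k => X i 0) eig_x.
  rewrite -mulmxA Nx0 mulmx0 !mxE => /esym/eqP.
  by rewrite quat_mulf_eq0 (negbTE lam_neq0) orbF => /eqP.
rewrite -mulmxA (mulmxA M) eig_x; apply/matrixP => i j.
rewrite (ord1 j) !mxE mulr_suml.
by apply: eq_bigr => r _; rewrite !mxE mulrA.
Qed.

Lemma eig_norms_setU0_sub M N :
  [set qnorm lam | lam in right_eigenvalue (M *m N)] `|` [set 0] `<=`
  [set qnorm lam | lam in right_eigenvalue (N *m M)] `|` [set 0].
Proof.
move=> _ [[lam eig_lam <-]|->]; last by right.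
have [->|lam_neq0] := eqVneq lam 0; first by right; rewrite qnorm0.
by left; exists lam => //; apply: right_eigenvalue_mulmxC.
Qed.

End SpectralRadius.

Section SupZero.
Local Open Scope classical_set_scope.
Variable R : realType.

Lemma sup_setU0_nonneg (S : set R) :
  (forall x, S x -> 0 <= x) -> sup (S `|` [set 0]) = sup S.
Proof.
move=> S_ge0; have [supS|not_supS] := pselect (has_sup S).
  by rewrite setUC sup_setU // => _ b -> /S_ge0.
have [->|/set0P [x Sx]] := eqVneq S set0; first by rewrite set0U sup1 sup0.
rewrite !sup_out // => -[_ [u ub_u]]; apply: not_supS.
by split; [exists x | exists u => y Sy; apply: ub_u; left].
Qed.

Lemma eq_sup_setU0 (S T : set R) :
  (forall x, S x -> 0 <= x) -> (forall x, T x -> 0 <= x) ->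
  S `|` [set 0] = T `|` [set 0] -> sup S = sup T.
Proof.
by move=> S_ge0 T_ge0 eqST; rewrite -sup_setU0_nonneg // eqST sup_setU0_nonneg.
Qed.

Lemma spec_radius_mulmxC k (M N : 'M[quat R]_k) :
  spec_radius (M *m N) = spec_radius (N *m M).
Proof.
rewrite /spec_radius; apply: eq_sup_setU0.
- by move=> x [lam _ <-]; apply: sqrtr_ge0.
- by move=> x [lam _ <-]; apply: sqrtr_ge0.
- by apply/seteqP; split; apply: eig_norms_setU0_sub.
Qed.

End SupZero.

Lemma rho_QT_qtprodC (R : realType) n n3 (A B : qtensor R n n n3) :
  rho_QT (qtprod A B) = rho_QT (qtprod B A).
Proof.
rewrite /rho_QT (bcirc_zM A B) (bcirc_zM B A).
exact: spec_radius_mulmxC.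
Qed.

Theorem lemma4p3 (R : realType) (n n3 : nat) (A B : qtensor R n n n3) :
  (0 < rho_QT (qtprod A B) < 1) <-> (0 < rho_QT (qtprod B A) < 1).
Proof. by rewrite (rho_QT_qtprodC A B). Qed.
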